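(* Let $f:[0,1]\to\mathbb{R}$ be bounded and let $0<b<1$. Assume that $f(t)=c$ for all $t\in[0,b)$, for some real constant $c$. Then for every $n\in\mathbb{N}$ and every $x\in(0,b)$, \[ |B_nf(x)-f(x)|\leq \|f-c\|\,e^{-nr(x,b)}. \]
   Context: For a bounded function $f:[0,1]\to\mathbb{R}$, $\|f\|=\sup_{t\in[0,1]}|f(t)|$, and $\|f-c\|$ is the supremum norm of $t\mapsto f(t)-c$. The $n$th Bernstein polynomial of $f$ is $B_nf(x)=\sum_{j=0}^n f(j/n)\binom{n}{j}x^j(1-x)^{n-j}$, $x\in[0,1]$. For $x,\theta\in(0,1)$, $r(x,\theta)=\theta\log\frac{\theta}{x}+(1-\theta)\log\frac{1-\theta}{1-x}$. *)

From HB Require Import structures.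
From mathcomp Require Import all_boot all_order all_algebra.
From mathcomp Require Import all_classical all_reals all_analysis.
Set Implicit Arguments. Unset Strict Implicit. Unset Printing Implicit Defensive.
Import Order.TTheory GRing.Theory Num.Theory.
Local Open Scope classical_set_scope.
Local Open Scope ring_scope.

Definition bernstein {R : realType} (n : nat) (f : R -> R) (x : R) : R :=
  \sum_(j < n.+1) f (j%:R / n%:R) * ('C(n, j))%:R * x ^+ j * (1 - x) ^+ (n - j).

Definition supnorm_shift {R : realType} (f : R -> R) (c : R) : R :=
  sup [set `|f t - c| | t in `[0, 1]].

Definition rent {R : realType} (x theta : R) : R :=
  theta * ln (theta / x) + (1 - theta) * ln ((1 - theta) / (1 - x)).

From HB Require Import structures.
From mathcomp Require Import all_boot all_order all_algebra.
From mathcomp Require Import all_classical all_reals all_analysis.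
From mathcomp Require Import ring.
Import Order.TTheory GRing.Theory Num.Theory.
Local Open Scope classical_set_scope.
Local Open Scope ring_scope.

(* A Chernoff bound. Writing B_n f(x) - c = sum_j (f(j/n) - c) p_j(x) with the
   Bernstein basis p_j, only the indices j >= b n contribute, each by at most
   ||f - c|| p_j(x). For every l >= 0, p_j(x) <= e^(l (j - b n)) p_j(x) on those
   indices, and summing over all j gives (e^(-l b) (x e^l + 1 - x))^n by the
   binomial theorem. The optimal tilt l = ln(b (1 - x) / (x (1 - b))), which is
   nonnegative because x < b, turns the base into e^(-r(x, b)). *)

Definition bernstein_basis {R : comPzRingType} (n j : nat) (x : R) : R :=
  'C(n, j)%:R * x ^+ j * (1 - x) ^+ (n - j).

Lemma sum_bernstein_basis_expr {R : comPzRingType} (n : nat) (x y : R) :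
  \sum_(j < n.+1) bernstein_basis n j x * y ^+ j = (x * y + (1 - x)) ^+ n.
Proof.
rewrite addrC exprDn; apply: eq_bigr => j _.
by rewrite /bernstein_basis exprMn -mulr_natl; ring.
Qed.

Lemma sum_bernstein_basis {R : comPzRingType} (n : nat) (x : R) :
  \sum_(j < n.+1) bernstein_basis n j x = 1.
Proof.
have := sum_bernstein_basis_expr n x 1.
rewrite mulr1 addrC subrK expr1n => <-.
by apply: eq_bigr => j _; rewrite expr1n mulr1.
Qed.

Lemma bernstein_basis_ge0 {R : numDomainType} (n j : nat) (x : R) :
  0 <= x <= 1 -> 0 <= bernstein_basis n j x.
Proof.
by case/andP=> x0 x1; rewrite !mulr_ge0 ?exprn_ge0 ?subr_ge0.
Qed.

Lemma bernsteinE {R : realType} (n : nat) (f : R -> R) (x : R) :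
  bernstein n f x = \sum_(j < n.+1) f (j%:R / n%:R) * bernstein_basis n j x.
Proof. by apply: eq_bigr => j _; rewrite /bernstein_basis !mulrA. Qed.

Lemma bernsteinBr {R : realType} (n : nat) (f : R -> R) (c x : R) :
  bernstein n f x - c =
  \sum_(j < n.+1) (f (j%:R / n%:R) - c) * bernstein_basis n j x.
Proof.
rewrite bernsteinE -[c in LHS]mulr1 -(sum_bernstein_basis n x) mulr_sumr -sumrB.
by apply: eq_bigr => j _; rewrite mulrBl.
Qed.

Lemma natr_div_itv01 (R : numFieldType) {n j : nat} :
  (j < n.+1)%N -> 0 <= (j%:R / n%:R : R) <= 1.
Proof.
move=> jn; rewrite divr_ge0 //=.
case: n jn => [|n] jn; first by rewrite invr0 mulr0.
by rewrite ler_pdivrMr ?ltr0n // mul1r ler_nat.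
Qed.

Lemma natr_div_lt {R : numFieldType} (n j : nat) (b : R) :
  j%:R < b * n%:R -> j%:R / n%:R < b.
Proof.
case: n => [|n].
  by rewrite mulr0 => /(le_lt_trans (ler0n _ j)); rewrite ltxx.
by rewrite ltr_pdivrMr ?ltr0n.
Qed.

Lemma ler_supnorm_shift {R : realType} (f : R -> R) (c t : R) :
  (exists M : R, forall t, 0 <= t <= 1 -> `|f t| <= M) ->
  0 <= t <= 1 -> `|f t - c| <= supnorm_shift f c.
Proof.
move=> [M fM] t01; apply: ub_le_sup; last by exists t; rewrite //= in_itv.
exists (M + `|c|) => _ [u u01 <-].
by rewrite (le_trans (ler_normB _ _)) // lerD2r fM -?in_itv.
Qed.

Lemma bernstein_basis_tail_le {R : realType} (n : nat) (x a l : R) :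
  0 <= x <= 1 -> 0 <= l ->
  \sum_(j < n.+1 | a <= j%:R) bernstein_basis n j x
    <= expR (- (l * a)) * (x * expR l + (1 - x)) ^+ n.
Proof.
move=> x01 l0; rewrite -sum_bernstein_basis_expr mulr_sumr big_mkcond /=.
apply: ler_sum => j _; have p0 := bernstein_basis_ge0 n j _ x01.
case: ifP => [aj|_]; last first.
  by rewrite mulr_ge0 ?expR_ge0 // mulr_ge0 // exprn_ge0 // expR_ge0.
rewrite mulrCA -[leLHS]mulr1 ler_wpM2l // -expRM_natl -expRD.
apply: le_trans (expR_ge1Dx _); rewrite lerDl.
by rewrite mulrC -mulNr -mulrDl mulr_ge0 // addrC subr_ge0.
Qed.

Definition log_odds_ratio {R : realType} (x b : R) : R :=
  ln (b / x) + ln ((1 - x) / (1 - b)).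

Lemma log_odds_ratio_ge0 {R : realType} (x b : R) :
  0 < x -> x <= b -> b < 1 -> 0 <= log_odds_ratio x b.
Proof.
move=> x0 xb b1; have x1 := le_lt_trans xb b1.
by rewrite addr_ge0 // ln_ge0 // !ler_pdivlMr ?subr_gt0 // !mul1r // lerB.
Qed.

Lemma expR_rent {R : realType} (x b : R) :
  0 < x < 1 -> 0 < b < 1 ->
  expR (- (log_odds_ratio x b * b)) * (x * expR (log_odds_ratio x b) + (1 - x))
  = expR (- rent x b).
Proof.
move=> /andP[x0 x1] /andP[b0 b1].
have x1_gt0 : 0 < 1 - x by rewrite subr_gt0.
have b1_gt0 : 0 < 1 - b by rewrite subr_gt0.
set A := ln (b / x); set B := ln ((1 - x) / (1 - b)).
have eA : expR A = b / x by rewrite lnK // posrE divr_gt0.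
have eB : expR B = (1 - x) / (1 - b) by rewrite lnK // posrE divr_gt0.
have tilted : x * expR (A + B) + (1 - x) = expR B.
  by rewrite expRD eA eB; field; rewrite gt_eqF // lt0r_neq0.
have rentE : rent x b = b * A - (1 - b) * B.
  by rewrite /rent -[(1 - b) / _]invf_div lnV ?posrE ?divr_gt0 // mulrN.
by rewrite /log_odds_ratio -/A -/B tilted -expRD rentE; congr expR; ring.
Qed.

Theorem corollary1 (R : realType) (f : R -> R) (b c : R) :
  (exists M : R, forall t, 0 <= t <= 1 -> `|f t| <= M) ->
  0 < b -> b < 1 ->
  (forall t, 0 <= t < b -> f t = c) ->
  forall (n : nat) (x : R), 0 < x < b ->
    `|bernstein n f x - f x| <= supnorm_shift f c * expR (- (n%:R * rent x b)).
Proof.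
move=> fbd b0 b1 fc n x /andP[x0 xb].
have x01 : 0 <= x <= 1 by rewrite ltW // ltW // (lt_trans xb).
have S0 : 0 <= supnorm_shift f c.
  by apply: le_trans (ler_supnorm_shift f c 0 fbd _); rewrite ?lexx ?ler01.
have term_below0 (j : 'I_n.+1) : ~~ (b * n%:R <= j%:R) ->
    (f (j%:R / n%:R) - c) * bernstein_basis n j x = 0.
  by rewrite -ltNge => /natr_div_lt jb; rewrite fc ?subrr ?mul0r // divr_ge0.
rewrite fc ?(ltW x0) ?xb // bernsteinBr -(big_rmcond _ _ term_below0).
apply: le_trans (ler_norm_sum _ _ _) _.
apply: le_trans (_ : _ <= \sum_(j < n.+1 | b * n%:R <= j%:R)
    supnorm_shift f c * bernstein_basis n j x) _.
  apply: ler_sum => j _; have p0 := bernstein_basis_ge0 n j _ x01.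
  rewrite normrM (ger0_norm p0) ler_wpM2r //.
  exact: ler_supnorm_shift _ _ _ fbd (natr_div_itv01 R (ltn_ord j)).
rewrite -mulr_sumr ler_wpM2l //.
apply: le_trans (bernstein_basis_tail_le _ _ _ (log_odds_ratio x b) x01 _) _.
  by rewrite log_odds_ratio_ge0 // ltW.
have -> : - (log_odds_ratio x b * (b * n%:R)) = n%:R * - (log_odds_ratio x b * b).
  by ring.
rewrite expRM_natl -exprMn expR_rent ?x0 ?b0 ?b1 ?(lt_trans xb b1) //.
by rewrite -expRM_natl mulrN.
Qed.
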